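(* Let $H$ be a $k$-linear semi-Hopf category and $A$ a right $H$-comodule category with $B=A^{{\rm co}H}$. Assume that (1) each $A_{xy}$ is a finitely generated projective left $B_x$-module; (2) each $H_{xy}$ is a finitely generated projective $k$-module; (3) for all $x,y\in X$ the maps $\delta^x_{xy}:{\rm Hom}_k(H_{xy},A_{yx})\to{}_{B_x}{\rm Hom}(A_{xy},A_{xx})$ and $\delta^x_{yy}:{\rm Hom}_k(H_{xy},A_{yy})\to{}_{B_x}{\rm Hom}(A_{xy},A_{xy})$, given by $\delta(g)(a)=a_{[0]}g(a_{[1]})$, are bijective. Then $A$ is an $H$-Galois category extension of $B$, i.e. all maps ${\rm can}^z_{xy}$ are bijective.
   Context: Let $k$ be a commutative ring; unadorned $\otimes$ is over $k$. A $k$-linear category $A$ with class of objects $X$ consists of $k$-modules $A_{xy}$, associative compositions $A_{xy}\otimes A_{yz}\to A_{xz}$, $a\otimes b\mapsto ab$, and units $1_x\in A_{xx}$. A $k$-linear semi-Hopf category $H$ (objects $X$) is a $k$-linear category in which each $H_{xy}$ is a $k$-coalgebra with $\Delta_{xy}(h)=h_{(1)}\otimes h_{(2)}$ and counit $\varepsilon_{xy}$, such that $\Delta_{xz}(hh')=h_{(1)}h'_{(1)}\otimes h_{(2)}h'_{(2)}$, $\Delta_{xx}(1_x)=1_x\otimes1_x$, $\varepsilon_{xz}(hh')=\varepsilon_{xy}(h)\varepsilon_{yz}(h')$, $\varepsilon_{xx}(1_x)=1$. A right $H$-comodule category is a $k$-linear category $A$ with objects $X$ such that each $A_{xy}$ is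 a right $H_{xy}$-comodule, $\rho_{xy}(a)=a_{[0]}\otimes a_{[1]}$, with $\rho_{xz}(ab)=a_{[0]}b_{[0]}\otimes a_{[1]}b_{[1]}$ and $\rho_{xx}(1_x)=1_x\otimes1_x$. Its coinvariants are $B_x=\{a\in A_{xx}\mid\rho_{xx}(a)=a\otimes1_x\}$; $A_{xy}$ is a $B_x$-$B_y$-bimodule by multiplication. The canonical maps are ${\rm can}^z_{xy}:A_{zx}\otimes_{B_x}A_{xy}\to A_{zy}\otimes H_{xy}$, $a\otimes_{B_x}a'\mapsto aa'_{[0]}\otimes a'_{[1]}$; $A$ is an $H$-Galois category extension of $B$ if they are all bijective. *)

From HB Require Import structures.
From mathcomp Require Import all_boot all_order all_algebra.
Set Implicit Arguments. Unset Strict Implicit. Unset Printing Implicit Defensive.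
Import GRing.Theory.
Local Open Scope ring_scope.

(* Tensor products, presented as setoids.                                    *)
(* An element of M (x)_bal N is a finite formal sum of elementary tensors    *)
(* m (x) n, represented by a list of pairs; [::] is 0 and ++ is addition.    *)
(* teq bal is the congruence generated by biadditivity, zeros and the        *)
(* balancing relation bal.  Since [::(m,n)] ++ [::(-m,n)] ~ [::(0,n)] ~ [::],*)
(* the quotient is an abelian group, namely the usual tensor product.        *)
Section Tensor.
Variables (M N : zmodType) (bal : M -> N -> M -> N -> Prop).
Inductive teq : seq (M * N) -> seq (M * N) -> Prop :=
| teq_refl s : teq s s
| teq_sym s t : teq s t -> teq t s
| teq_trans s t u : teq s t -> teq t u -> teq s u
| teq_cat s s' t t' : teq s s' -> teq t t' -> teq (s ++ t) (s' ++ t')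
| teq_comm s t : teq (s ++ t) (t ++ s)
| teq_addl m m' n : teq [:: (m + m', n)] [:: (m, n); (m', n)]
| teq_addr m n n' : teq [:: (m, n + n')] [:: (m, n); (m, n')]
| teq_0l n : teq [:: (0, n)] [::]
| teq_0r m : teq [:: (m, 0)] [::]
| teq_bal m n m' n' : bal m n m' n' -> teq [:: (m, n)] [:: (m', n')].
End Tensor.

Definition kbal (k : pzRingType) (M N : lmodType k) (m : M) (n : N) (m' : M) (n' : N) :=
  exists c : k, m = c *: m' /\ n' = c *: n.

Definition teqk (k : pzRingType) (M N : lmodType k) := teq (@kbal k M N).

Section Tensor3.
Variables (k : pzRingType) (M N P : lmodType k).
Inductive teq3 : seq (M * N * P) -> seq (M * N * P) -> Prop :=
| teq3_refl s : teq3 s s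
| teq3_sym s t : teq3 s t -> teq3 t s
| teq3_trans s t u : teq3 s t -> teq3 t u -> teq3 s u
| teq3_cat s s' t t' : teq3 s s' -> teq3 t t' -> teq3 (s ++ t) (s' ++ t')
| teq3_comm s t : teq3 (s ++ t) (t ++ s)
| teq3_add1 m m' n p : teq3 [:: (m + m', n, p)] [:: (m, n, p); (m', n, p)]
| teq3_add2 m n n' p : teq3 [:: (m, n + n', p)] [:: (m, n, p); (m, n', p)]
| teq3_add3 m n p p' : teq3 [:: (m, n, p + p')] [:: (m, n, p); (m, n, p')]
| teq3_01 n p : teq3 [:: (0, n, p)] [::]
| teq3_02 m p : teq3 [:: (m, 0, p)] [::]
| teq3_03 m n : teq3 [:: (m, n, 0)] [::]
| teq3_bal12 (c : k) m n p : teq3 [:: (c *: m, n, p)] [:: (m, c *: n, p)]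
| teq3_bal23 (c : k) m n p : teq3 [:: (m, c *: n, p)] [:: (m, n, c *: p)].
End Tensor3.

Definition tscale (k : pzRingType) (M : lmodType k) (N : Type) (c : k)
  (s : seq (M * N)) : seq (M * N) := [seq (c *: p.1, p.2) | p <- s].

Section Categories.
Variables (k : comPzRingType) (X : Type).

Record lin_cat (C : X -> X -> lmodType k)
  (mul : forall x y z, C x y -> C y z -> C x z) (one : forall x, C x x) : Prop := {
  lc_linl : forall x y z (c : k) (a a' : C x y) (b : C y z),
      mul _ _ _ (c *: a + a') b = c *: mul _ _ _ a b + mul _ _ _ a' b;
  lc_linr : forall x y z (c : k) (a : C x y) (b b' : C y z),
      mul _ _ _ a (c *: b + b') = c *: mul _ _ _ a b + mul _ _ _ a b';
  lc_assoc : forall x y z w (a : C x y) (b : C y z) (d : C z w),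
      mul _ _ _ (mul _ _ _ a b) d = mul _ _ _ a (mul _ _ _ b d);
  lc_1l : forall x y (a : C x y), mul _ _ _ (one x) a = a;
  lc_1r : forall x y (a : C x y), mul _ _ _ a (one y) = a }.

Variables (H : X -> X -> lmodType k)
  (mulH : forall x y z, H x y -> H y z -> H x z) (oneH : forall x, H x x)
  (Delta : forall x y, H x y -> seq (H x y * H x y))
  (eps : forall x y, H x y -> k).

Record semi_hopf_cat : Prop := {
  sh_lincat : lin_cat mulH oneH;
  sh_Delta_lin : forall x y (c : k) (h h' : H x y),
      teqk (Delta (c *: h + h')) (tscale c (Delta h) ++ Delta h');
  sh_eps_lin : forall x y (c : k) (h h' : H x y),
      eps (c *: h + h') = c * eps h + eps h';
  sh_coassoc : forall x y (h : H x y),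
      teq3 (flatten [seq [seq (q.1, q.2, p.2) | q <- Delta p.1] | p <- Delta h])
           (flatten [seq [seq (p.1, q.1, q.2) | q <- Delta p.2] | p <- Delta h]);
  sh_counitl : forall x y (h : H x y), \sum_(p <- Delta h) eps p.1 *: p.2 = h;
  sh_counitr : forall x y (h : H x y), \sum_(p <- Delta h) eps p.2 *: p.1 = h;
  sh_Delta_mul : forall x y z (h : H x y) (h' : H y z),
      teqk (Delta (mulH h h'))
           [seq (mulH p.1 q.1, mulH p.2 q.2) | p <- Delta h, q <- Delta h'];
  sh_Delta_one : forall x, teqk (Delta (oneH x)) [:: (oneH x, oneH x)];
  sh_eps_mul : forall x y z (h : H x y) (h' : H y z),
      eps (mulH h h') = eps h * eps h';
  sh_eps_one : forall x, eps (oneH x) = 1 }.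

Variables (A : X -> X -> lmodType k)
  (mulA : forall x y z, A x y -> A y z -> A x z) (oneA : forall x, A x x)
  (rho : forall x y, A x y -> seq (A x y * H x y)).

Record comodule_cat : Prop := {
  cc_lincat : lin_cat mulA oneA;
  cc_rho_lin : forall x y (c : k) (a a' : A x y),
      teqk (rho (c *: a + a')) (tscale c (rho a) ++ rho a');
  cc_coassoc : forall x y (a : A x y),
      teq3 (flatten [seq [seq (q.1, q.2, p.2) | q <- rho p.1] | p <- rho a])
           (flatten [seq [seq (p.1, q.1, q.2) | q <- Delta p.2] | p <- rho a]);
  cc_counit : forall x y (a : A x y), \sum_(p <- rho a) eps p.2 *: p.1 = a;
  cc_rho_mul : forall x y z (a : A x y) (b : A y z),
      teqk (rho (mulA a b))
           [seq (mulA p.1 q.1, mulH p.2 q.2) | p <- rho a, q <- rho b];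
  cc_rho_one : forall x, teqk (rho (oneA x)) [:: (oneA x, oneH x)] }.

Definition coinv x (b : A x x) : Prop := teqk (rho b) [:: (b, oneH x)].

(* A x y is a finitely generated projective left B_x-module: a B_x-linear  *)
(* retract of some free module B_x^n.                                       *)
Definition fgp_left_coinv (x y : X) : Prop :=
  exists (n : nat) (f : A x y -> 'I_n -> A x x) (g : ('I_n -> A x x) -> A x y),
    [/\ forall a i, coinv (f a i),
        forall (b : A x x) (a a' : A x y), coinv b ->
           forall i, f (mulA b a + a') i = mulA b (f a i) + f a' i,
        forall (b : A x x) (v w : 'I_n -> A x x), coinv b ->
           (forall i, coinv (v i)) -> (forall i, coinv (w i)) ->
           g (fun i => mulA b (v i) + w i) = mulA b (g v) + g w
      & forall a, g (f a) = a].

Definition Bbal (z x y : X) (a : A z x) (a' : A x y) (a1 : A z x) (a1' : A x y) :=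
  exists b : A x x, [/\ coinv b, a = mulA a1 b & a1' = mulA b a'].

Definition teqB (z x y : X) := teq (@Bbal z x y).

Definition klin (M N : lmodType k) (g : M -> N) :=
  forall (c : k) (m m' : M), g (c *: m + m') = c *: g m + g m'.
Definition Blin x y w (f : A x y -> A x w) :=
  forall (b : A x x) (a a' : A x y), coinv b ->
    f (mulA b a + a') = mulA b (f a) + f a'.

Definition delta x y w (g : H x y -> A y w) (a : A x y) : A x w :=
  \sum_(p <- rho a) mulA p.1 (g p.2).

Definition delta_bij (x y w : X) : Prop :=
  (forall g g' : H x y -> A y w, klin g -> klin g' ->
     (forall a, delta g a = delta g' a) -> forall h, g h = g' h) /\
  (forall f : A x y -> A x w, Blin f ->
     exists g : H x y -> A y w, klin g /\ forall a, delta g a = f a).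

Definition can (z x y : X) (s : seq (A z x * A x y)) : seq (A z y * H x y) :=
  flatten [seq [seq (mulA p.1 q.1, q.2) | q <- rho p.2] | p <- s].

Definition can_bij (z x y : X) : Prop :=
  [/\ forall s t : seq (A z x * A x y), teqB s t -> teqk (can s) (can t),
      forall s t : seq (A z x * A x y), teqk (can s) (can t) -> teqB s t
    & forall u : seq (A z y * H x y), exists s : seq (A z x * A x y),
        teqk (can s) u].

End Categories.

(* The inverse of can^z_{xy} is built from a dual basis (f, e) of A_xy over B_x.
   By surjectivity of delta^x_{xy}, each coordinate functional f(-)_i is delta(gamma_i)
   for some k-linear gamma_i : H_xy -> A_yx; put kappa(a (x) h) = sum_i a gamma_i(h) (x) e_i.
   Then kappa (can (a (x) a')) = sum_i a f(a')_i (x) e_i = a (x) a', since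
   sum a'_[0] gamma_i(a'_[1]) = delta(gamma_i)(a') = f(a')_i. Conversely can o kappa = id
   reduces to sum_i gamma_i(h) e_i[0] (x) e_i[1] = 1_y (x) h, which is checked on the
   coordinates of a k-dual basis of H_xy: the j-th coordinate, as a function of h, has the
   same image under the injective delta^y_{yy} as h |-> fH(h)_j 1_y. *)

From HB Require Import structures.
From mathcomp Require Import all_boot all_order all_algebra.
From Stdlib Require Import FunctionalExtensionality IndefiniteDescription.
Set Implicit Arguments. Unset Strict Implicit. Unset Printing Implicit Defensive.
Import GRing.Theory.
Local Open Scope ring_scope.

Arguments teq_refl {M N bal}.
Arguments teq_sym {M N bal s t}.
Arguments teq_trans {M N bal s t u}.
Arguments teq_cat {M N bal s s' t t'}.
Arguments teq_comm {M N bal}.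
Arguments teq_addl {M N bal}.
Arguments teq_addr {M N bal}.
Arguments teq_0l {M N bal}.
Arguments teq_0r {M N bal}.
Arguments teq_bal {M N bal}.

Definition flatmap (S T : Type) (phi : S -> seq T) (s : seq S) : seq T :=
  flatten (map phi s).

Lemma flatmap_cat S T (phi : S -> seq T) s t :
  flatmap phi (s ++ t) = flatmap phi s ++ flatmap phi t.
Proof. by rewrite /flatmap map_cat flatten_cat. Qed.

Lemma flatmap_map S S' T (phi : S' -> seq T) (f : S -> S') s :
  flatmap phi (map f s) = flatmap (phi \o f) s.
Proof. by rewrite /flatmap -map_comp. Qed.

Lemma flatmap_flatmap S S' T (phi : S' -> seq T) (psi : S -> seq S') s :
  flatmap phi (flatmap psi s) = flatmap (fun p => flatmap phi (psi p)) s.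
Proof. by elim: s => //= p s IH; rewrite flatmap_cat IH. Qed.

Lemma flatmap_nseq1 S T (f : S -> T) s : flatmap (fun p => [:: f p]) s = map f s.
Proof. by elim: s => //= p s IH; rewrite -IH. Qed.

Section FormalTensors.
Variables (M N : zmodType) (bal : M -> N -> M -> N -> Prop).
Local Notation teq := (teq bal).

Lemma teq_catl s t u : teq t u -> teq (s ++ t) (s ++ u).
Proof. by move=> h; apply: teq_cat => //; apply: teq_refl. Qed.

Lemma teq_catr s t u : teq t u -> teq (t ++ s) (u ++ s).
Proof. by move=> h; apply: teq_cat => //; apply: teq_refl. Qed.

Lemma teq_cons p q s t : teq [:: p] [:: q] -> teq s t -> teq (p :: s) (q :: t).
Proof. exact: (@teq_cat _ _ _ [:: p] [:: q]). Qed.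

Lemma teq_perm s t : perm_eq s t -> teq s t.
Proof.
elim: s t => [|p s IH] t.
  by case: t => [|q t] pt; [apply: teq_refl | move/perm_size: pt].
move=> pst; have pt : p \in t by rewrite -(perm_mem pst) mem_head.
case/splitPr: pt pst => t1 t2 pst.
have ps : perm_eq s (t1 ++ t2).
  by rewrite -(perm_cons p) (perm_trans pst) // perm_sym -cat1s perm_catCA.
apply: teq_trans (teq_catl [:: p] (IH _ ps)) _.
rewrite catA -[t1 ++ p :: t2]cat_rcons -cats1.
exact/teq_catr/teq_comm.
Qed.

Lemma teq_map (I : Type) (F G : I -> M * N) l :
  (forall i, teq [:: F i] [:: G i]) -> teq (map F l) (map G l).
Proof.
by move=> h; elim: l => [|i l IH]; [apply: teq_refl | apply: teq_cons].
Qed.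

Lemma teq_flatmap_id (F : M * N -> seq (M * N)) s :
  (forall p, teq (F p) [:: p]) -> teq (flatmap F s) s.
Proof.
by move=> h; elim: s => [|p s IH]; [apply: teq_refl | apply: (teq_cat (h p))].
Qed.

Lemma teq_map_addl (I : Type) (u v : I -> M) (G : I -> N) l :
  teq [seq (u i + v i, G i) | i <- l]
      ([seq (u i, G i) | i <- l] ++ [seq (v i, G i) | i <- l]).
Proof.
elim: l => [|i l IH] /=; first exact: teq_refl.
apply: teq_trans (teq_cat (teq_addl (u i) (v i) (G i)) IH) _.
by apply: teq_perm; rewrite /= perm_cons perm_sym -cat1s perm_catCA.
Qed.

Lemma teq_map_addr (I : Type) (u v : I -> N) (G : I -> M) l :
  teq [seq (G i, u i + v i) | i <- l]
      ([seq (G i, u i) | i <- l] ++ [seq (G i, v i) | i <- l]).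
Proof.
elim: l => [|i l IH] /=; first exact: teq_refl.
apply: teq_trans (teq_cat (teq_addr (G i) (u i) (v i)) IH) _.
by apply: teq_perm; rewrite /= perm_cons perm_sym -cat1s perm_catCA.
Qed.

Lemma teq_map_0l (I : Type) (G : I -> N) l : teq [seq (0, G i) | i <- l] [::].
Proof.
elim: l => [|i l IH]; first exact: teq_refl.
exact: (@teq_cat _ _ _ _ [::] _ [::] (teq_0l _) IH).
Qed.

Lemma teq_map_0r (I : Type) (G : I -> M) l : teq [seq (G i, 0) | i <- l] [::].
Proof.
elim: l => [|i l IH]; first exact: teq_refl.
exact: (@teq_cat _ _ _ _ [::] _ [::] (teq_0r _) IH).
Qed.

Lemma teq_sumr (I : Type) m (F : I -> N) r :
  teq [:: (m, \sum_(i <- r) F i)] [seq (m, F i) | i <- r].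
Proof.
elim: r => [|i r IH]; first by rewrite big_nil; apply: teq_0r.
rewrite big_cons; apply: teq_trans (teq_addr m (F i) _) _.
exact: teq_cons (teq_refl _) IH.
Qed.

Lemma teq_flatmap_suml (Q I : Type) (F : Q -> I -> M) (G : I -> N) r l :
  teq (flatmap (fun q => [seq (F q i, G i) | i <- l]) r)
      [seq (\sum_(q <- r) F q i, G i) | i <- l].
Proof.
elim: r => [|q r IH].
  by under eq_map => i do rewrite big_nil; apply/teq_sym/teq_map_0l.
apply: teq_trans (teq_catl [seq (F q i, G i) | i <- l] IH) _; apply: teq_sym.
under eq_map => i do rewrite big_cons; exact: teq_map_addl.
Qed.

Lemma teq_oppl_cat s : teq ([seq (- p.1, p.2) | p <- s] ++ s) [::].
Proof.
elim: s => [|[m n] s IH]; first exact: teq_refl.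
have h : teq [:: (- m, n); (m, n)] [::].
  by apply: teq_trans (teq_sym (teq_addl _ _ _)) _; rewrite addNr; apply: teq_0l.
apply: teq_trans _ (teq_cat h IH); apply: teq_perm.
by rewrite /= perm_cons perm_sym -cat1s perm_catCA.
Qed.

(* Formal sums are only a monoid; [teq_oppl_cat] provides the inverse needed to cancel [s]. *)
Lemma teq_cat_self s : teq s (s ++ s) -> teq s [::].
Proof.
move=> h; set s' := [seq (- p.1, p.2) | p <- s].
apply: (teq_trans (t := s ++ (s' ++ s))).
  by rewrite -[X in teq X _]cats0; apply/teq_catl/teq_sym/teq_oppl_cat.
apply: (teq_trans (t := (s ++ s) ++ s')).
  by apply: teq_perm; rewrite -catA perm_cat2l perm_catC.
apply: teq_trans (teq_catr s' (teq_sym h)) _.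
exact: teq_trans (teq_comm _ _) (teq_oppl_cat s).
Qed.

Lemma teq_sum (V : zmodType) (beta : M -> N -> V) :
  (forall m m' n, beta (m + m') n = beta m n + beta m' n) ->
  (forall m n n', beta m (n + n') = beta m n + beta m n') ->
  (forall m n m' n', bal m n m' n' -> beta m n = beta m' n') ->
  forall s t, teq s t -> \sum_(p <- s) beta p.1 p.2 = \sum_(p <- t) beta p.1 p.2.
Proof.
move=> hl hr hb.
have b0l n : beta 0 n = 0 by apply: (@addrI _ (beta 0 n)); rewrite -hl !addr0.
have b0r m : beta m 0 = 0 by apply: (@addrI _ (beta m 0)); rewrite -hr !addr0.
move=> s t; elim => {s t}.
- by [].
- by move=> s t _ ->.
- by move=> s t u _ -> _ ->.
- by move=> s s' t t' _ h1 _ h2; rewrite !big_cat h1 h2.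
- by move=> s t; rewrite !big_cat /= addrC.
- by move=> m m' n; rewrite !big_cons !big_nil hl !addr0.
- by move=> m n n'; rewrite !big_cons !big_nil hr !addr0.
- by move=> n; rewrite big_cons !big_nil b0l addr0.
- by move=> m; rewrite big_cons !big_nil b0r addr0.
- by move=> m n m' n' h; rewrite !big_cons !big_nil (hb _ _ _ _ h).
Qed.

End FormalTensors.

Section FormalTensorMaps.
Variables (M N M' N' : zmodType) (bal : M -> N -> M -> N -> Prop)
  (bal' : M' -> N' -> M' -> N' -> Prop) (phi : M * N -> seq (M' * N')).
Hypotheses
  (phiDl : forall m m' n, teq bal' (phi (m + m', n)) (phi (m, n) ++ phi (m', n)))
  (phiDr : forall m n n', teq bal' (phi (m, n + n')) (phi (m, n) ++ phi (m, n')))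
  (phi0l : forall n, teq bal' (phi (0, n)) [::])
  (phi0r : forall m, teq bal' (phi (m, 0)) [::])
  (phi_bal : forall m n m' n', bal m n m' n' -> teq bal' (phi (m, n)) (phi (m', n'))).

Lemma teq_flatmap s t : teq bal s t -> teq bal' (flatmap phi s) (flatmap phi t).
Proof.
elim => {s t} [s|s t _|s t u _ h1 _ h2|s s' t t' _ h1 _ h2|s t|m m' n|m n n'|n|m|m n m' n' h].
- exact: teq_refl.
- exact: teq_sym.
- exact: teq_trans h1 h2.
- by rewrite !flatmap_cat; apply: teq_cat.
- by rewrite !flatmap_cat; apply: teq_comm.
all: rewrite /flatmap /= !cats0.
- exact: phiDl.
- exact: phiDr.
- exact: phi0l.
- exact: phi0r.
- exact: phi_bal.
Qed.

End FormalTensorMaps.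

Section LinearCategory.
Variables (k : comPzRingType) (X : Type) (C : X -> X -> lmodType k)
  (mul : forall x y z, C x y -> C y z -> C x z) (one : forall x, C x x).
Hypothesis hC : lin_cat mul one.

Lemma lc_mulDl x y z (a a' : C x y) (b : C y z) : mul (a + a') b = mul a b + mul a' b.
Proof. by have := lc_linl hC 1 a a' b; rewrite !scale1r. Qed.

Lemma lc_mulDr x y z (a : C x y) (b b' : C y z) : mul a (b + b') = mul a b + mul a b'.
Proof. by have := lc_linr hC 1 a b b'; rewrite !scale1r. Qed.

Lemma lc_mul0l x y z (b : C y z) : mul (0 : C x y) b = 0.
Proof. by apply: (@addrI _ (mul (0 : C x y) b)); rewrite -lc_mulDl !addr0. Qed.

Lemma lc_mul0r x y z (a : C x y) : mul a (0 : C y z) = 0.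
Proof. by apply: (@addrI _ (mul a (0 : C y z))); rewrite -lc_mulDr !addr0. Qed.

Lemma lc_mulZl x y z c (a : C x y) (b : C y z) : mul (c *: a) b = c *: mul a b.
Proof. by have := lc_linl hC c a 0 b; rewrite !addr0 lc_mul0l addr0. Qed.

Lemma lc_mulZr x y z c (a : C x y) (b : C y z) : mul a (c *: b) = c *: mul a b.
Proof. by have := lc_linr hC c a b 0; rewrite !addr0 lc_mul0r addr0. Qed.

Lemma lc_mul_suml x y z (I : Type) (r : seq I) (F : I -> C x y) (b : C y z) :
  mul (\sum_(i <- r) F i) b = \sum_(i <- r) mul (F i) b.
Proof.
elim: r => [|i r IH]; first by rewrite !big_nil lc_mul0l.
by rewrite !big_cons lc_mulDl IH.
Qed.

Lemma lc_mul_sumr x y z (I : Type) (r : seq I) (F : I -> C y z) (a : C x y) :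
  mul a (\sum_(i <- r) F i) = \sum_(i <- r) mul a (F i).
Proof.
elim: r => [|i r IH]; first by rewrite !big_nil lc_mul0r.
by rewrite !big_cons lc_mulDr IH.
Qed.

End LinearCategory.

Section KLinear.
Variables (k : comPzRingType) (M N : lmodType k) (g : M -> N).
Hypothesis hg : klin g.

Lemma klinD m m' : g (m + m') = g m + g m'.
Proof. by have := hg 1 m m'; rewrite !scale1r. Qed.

Lemma klin0 : g 0 = 0.
Proof. by apply: (@addrI _ (g 0)); rewrite -klinD !addr0. Qed.

Lemma klinZ c m : g (c *: m) = c *: g m.
Proof. by have := hg c m 0; rewrite !addr0 klin0 addr0. Qed.

End KLinear.

Lemma teqk_sum (k : pzRingType) (M N : lmodType k) (V : zmodType) (beta : M -> N -> V) :
  (forall m m' n, beta (m + m') n = beta m n + beta m' n) ->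
  (forall m n n', beta m (n + n') = beta m n + beta m n') ->
  (forall c m n, beta (c *: m) n = beta m (c *: n)) ->
  forall s t, teqk s t -> \sum_(p <- s) beta p.1 p.2 = \sum_(p <- t) beta p.1 p.2.
Proof. by move=> hl hr hb; apply: teq_sum => // m n m' n' [c [-> ->]]. Qed.

Lemma tscale1 (k : pzRingType) (M : lmodType k) (N : Type) (s : seq (M * N)) :
  tscale 1 s = s.
Proof. by elim: s => [|[m n] s IH] //=; rewrite scale1r IH. Qed.

Section ComoduleCategory.
Variables (k : comPzRingType) (X : Type) (H : X -> X -> lmodType k)
  (mulH : forall x y z, H x y -> H y z -> H x z) (oneH : forall x, H x x)
  (Delta : forall x y, H x y -> seq (H x y * H x y))
  (eps : forall x y, H x y -> k)
  (A : X -> X -> lmodType k)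
  (mulA : forall x y z, A x y -> A y z -> A x z) (oneA : forall x, A x x)
  (rho : forall x y, A x y -> seq (A x y * H x y)).
Hypotheses (hH : lin_cat mulH oneH)
  (hA : comodule_cat mulH oneH Delta eps mulA oneA rho).

Let hAcat := cc_lincat hA.
Local Notation coinv := (coinv oneH rho).
Local Notation can := (can mulA rho).

Lemma rhoD x y (a a' : A x y) : teqk (rho (a + a')) (rho a ++ rho a').
Proof. by have := cc_rho_lin hA 1 a a'; rewrite scale1r tscale1. Qed.

Lemma rho0 x y : teqk (rho (0 : A x y)) [::].
Proof. by apply: teq_cat_self; have := rhoD (0 : A x y) 0; rewrite addr0. Qed.

Lemma coinv0 x : coinv (0 : A x x).
Proof. exact: teq_trans (rho0 x x) (teq_sym (teq_0l _)). Qed.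

Lemma coinv1 x : coinv (oneA x).
Proof. exact: cc_rho_one hA x. Qed.

Lemma teqk_mull x y z (N : lmodType k) (a : A x y) (s t : seq (A y z * N)) :
  teqk s t -> teqk [seq (mulA a p.1, p.2) | p <- s] [seq (mulA a p.1, p.2) | p <- t].
Proof.
move=> h; rewrite -!(flatmap_nseq1 (fun p => (mulA a p.1, p.2))).
apply: teq_flatmap h => /= [m m' n|m n n'|n|m|m n m' n' [c [-> ->]]].
- by rewrite (lc_mulDr hAcat); apply: teq_addl.
- exact: teq_addr.
- by rewrite (lc_mul0r hAcat); apply: teq_0l.
- exact: teq_0r.
- by apply: teq_bal; exists c; rewrite (lc_mulZr hAcat).
Qed.

Lemma teqk_tmulr x y z (r : seq (A y z * H y z)) (s t : seq (A x y * H x y)) :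
  teqk s t ->
  teqk [seq (mulA p.1 q.1, mulH p.2 q.2) | p <- s, q <- r]
       [seq (mulA p.1 q.1, mulH p.2 q.2) | p <- t, q <- r].
Proof.
move=> h; apply: (teq_flatmap (phi := fun p => [seq (mulA p.1 q.1, mulH p.2 q.2) | q <- r])) h
  => /= [m m' n|m n n'|n|m|m n m' n' [c [-> ->]]].
- under eq_map => q do rewrite (lc_mulDl hAcat).
  exact: (teq_map_addl _ (fun q => mulA m q.1) (fun q => mulA m' q.1)).
- under eq_map => q do rewrite (lc_mulDl hH).
  exact: (teq_map_addr _ (fun q => mulH n q.2) (fun q => mulH n' q.2)).
- under eq_map => q do rewrite (lc_mul0l hAcat); exact: teq_map_0l.
- under eq_map => q do rewrite (lc_mul0l hH); exact: teq_map_0r.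
- apply: teq_map => q; apply: teq_bal; exists c.
  by rewrite (lc_mulZl hAcat) (lc_mulZl hH).
Qed.

Lemma rho_mul_coinv x y (b : A x x) (a : A x y) : coinv b ->
  teqk (rho (mulA b a)) [seq (mulA b q.1, q.2) | q <- rho a].
Proof.
move=> hb; apply: teq_trans (cc_rho_mul hA b a) _.
apply: teq_trans (teqk_tmulr (rho a) hb) _; rewrite /= cats0.
by under eq_map => q do rewrite (lc_1l hH); apply: teq_refl.
Qed.

Definition can1 z x y (p : A z x * A x y) : seq (A z y * H x y) :=
  [seq (mulA p.1 q.1, q.2) | q <- rho p.2].

Lemma canE z x y (s : seq (A z x * A x y)) : can s = flatmap (@can1 z x y) s.
Proof. by []. Qed.

Lemma teqB_can z x y (s t : seq (A z x * A x y)) :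
  teqB oneH mulA rho s t -> teqk (can s) (can t).
Proof.
move=> h; rewrite !canE; apply: teq_flatmap h => [m m' n|m n n'|n|m|m n m' n' [b [hb -> ->]]];
  rewrite /can1 /=.
- under eq_map => q do rewrite (lc_mulDl hAcat).
  exact: (teq_map_addl _ (fun q => mulA m q.1) (fun q => mulA m' q.1)).
- by rewrite -map_cat; apply/teqk_mull/rhoD.
- under eq_map => q do rewrite (lc_mul0l hAcat); exact: teq_map_0l.
- exact: (teqk_mull m (rho0 _ _)).
- apply: teq_sym; apply: teq_trans (teqk_mull m' (rho_mul_coinv n hb)) _.
  rewrite -map_comp; under eq_map => q do rewrite /= -(lc_assoc hAcat).
  exact: teq_refl.
Qed.

End ComoduleCategory.

Section CategoryDualBasis.
Variables (k : comPzRingType) (X : Type) (C : X -> X -> lmodType k)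
  (mul : forall x y z, C x y -> C y z -> C x z) (one : forall x, C x x).
Hypothesis hC : lin_cat mul one.
Variables (x y : X) (B : C x x -> Prop) (n : nat)
  (f : C x y -> 'I_n -> C x x) (g : ('I_n -> C x x) -> C x y).
Hypotheses (B0 : B 0) (B1 : B (one x)) (f_B : forall a i, B (f a i))
  (g_Blin : forall b v w, B b -> (forall i, B (v i)) -> (forall i, B (w i)) ->
     g (fun i => mul b (v i) + w i) = mul b (g v) + g w)
  (fK : cancel f g).

Definition cat_dual_basis (i : 'I_n) : C x y := g (fun j => if j == i then one x else 0).

Lemma cat_dual_basis_g0 : g (fun _ => 0) = 0.
Proof.
have := g_Blin B1 (fun _ => B0) (fun _ => B0).
rewrite !(lc_1l hC) addr0 => gD.
by apply: (@addrI _ (g (fun _ => 0))); rewrite addr0 -gD.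
Qed.

Lemma cat_dual_basis_g v : (forall i, B (v i)) ->
  g v = \sum_(i <- enum 'I_n) mul (v i) (cat_dual_basis i).
Proof.
move=> vB.
suff gr r : uniq r -> g (fun j => if j \in r then v j else 0)
                    = \sum_(i <- r) mul (v i) (cat_dual_basis i).
  rewrite -gr ?enum_uniq //; congr g.
  by apply: functional_extensionality => j; rewrite mem_enum.
elim: r => [|i r IH] /=; first by rewrite big_nil -cat_dual_basis_g0.
case/andP => ir ur.
have -> : (fun j => if j \in i :: r then v j else 0) =
  (fun j => mul (v i) (if j == i then one x else 0) + (if j \in r then v j else 0)).
  apply: functional_extensionality => j; rewrite in_cons.
  case: eqVneq => [->|_] /=; first by rewrite (negbTE ir) (lc_1r hC) addr0.
  by rewrite (lc_mul0r hC) add0r.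
by rewrite g_Blin ?IH ?big_cons // => j; case: ifP.
Qed.

Lemma cat_dual_basis_expansion a :
  a = \sum_(i <- enum 'I_n) mul (f a i) (cat_dual_basis i).
Proof. by rewrite -cat_dual_basis_g. Qed.

End CategoryDualBasis.

Section ModuleDualBasis.
Variables (k : comPzRingType) (P : lmodType k) (n : nat)
  (f : P -> 'I_n -> k) (g : ('I_n -> k) -> P).
Hypotheses (f_lin : forall c p p' i, f (c *: p + p') i = c * f p i + f p' i)
  (g_lin : forall c v w, g (fun i => c * v i + w i) = c *: g v + g w)
  (fK : cancel f g).

Definition lmod_dual_basis (i : 'I_n) : P := g (fun j => if j == i then 1 else 0).

Lemma lmod_dual_basis_g0 : g (fun _ => 0) = 0.
Proof.
have := g_lin 1 (fun _ => 0) (fun _ => 0); rewrite scale1r => gD.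
apply: (@addrI _ (g (fun _ => 0))); rewrite addr0 -gD.
by congr g; apply: functional_extensionality => j; rewrite mulr0 addr0.
Qed.

Lemma lmod_dual_basis_expansion p :
  p = \sum_(i <- enum 'I_n) f p i *: lmod_dual_basis i.
Proof.
suff gr r : uniq r -> g (fun j => if j \in r then f p j else 0)
                    = \sum_(i <- r) f p i *: lmod_dual_basis i.
  rewrite -gr ?enum_uniq // -{1}(fK p); congr g.
  by apply: functional_extensionality => j; rewrite mem_enum.
elim: r => [|i r IH] /=; first by rewrite big_nil -lmod_dual_basis_g0.
case/andP => ir ur.
have -> : (fun j => if j \in i :: r then f p j else 0) =
  (fun j => f p i * (if j == i then 1 else 0) + (if j \in r then f p j else 0)).
  apply: functional_extensionality => j; rewrite in_cons.
  case: eqVneq => [->|_] /=; first by rewrite (negbTE ir) mulr1 addr0.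
  by rewrite mulr0 add0r.
by rewrite g_lin IH // big_cons.
Qed.

(* [tcoord t j] is the [j]-th component of [t] under [M (x)_k P ~ M^n] given by the dual basis. *)
Definition tcoord (M : lmodType k) (t : seq (M * P)) (j : 'I_n) : M :=
  \sum_(q <- t) f q.2 j *: q.1.

Lemma tcoord_teqk (M : lmodType k) (t t' : seq (M * P)) j :
  teqk t t' -> tcoord t j = tcoord t' j.
Proof.
have fj_lin : klin (fun p => f p j : k^o) by move=> c p p'; apply: f_lin.
apply: (teqk_sum (beta := fun m p => f p j *: m)) => /= [m m' p|m p p'|c m p].
- exact: scalerDr.
- by rewrite (klinD fj_lin) scalerDl.
- by rewrite (klinZ fj_lin) scalerA mulrC.
Qed.

Lemma teqk_tcoord_expansion (M : lmodType k) (t : seq (M * P)) :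
  teqk t [seq (tcoord t j, lmod_dual_basis j) | j <- enum 'I_n].
Proof.
apply: teq_sym.
apply: teq_trans
  (teq_sym (teq_flatmap_suml _ (fun q j => f q.2 j *: q.1) lmod_dual_basis t _)) _.
apply: teq_flatmap_id => -[m p] /=.
rewrite [X in [:: (m, X)]](lmod_dual_basis_expansion p).
apply: teq_sym; apply: teq_trans (teq_sumr _ m _ _) _.
by apply: teq_map => j; apply: teq_sym; apply: teq_bal; exists (f p j).
Qed.

Lemma teqk_tcoord (M : lmodType k) (t t' : seq (M * P)) :
  (forall j, tcoord t j = tcoord t' j) -> teqk t t'.
Proof.
move=> tt'; apply: teq_trans (teqk_tcoord_expansion t) _.
by apply: teq_sym; under eq_map => j do rewrite tt'; apply: teqk_tcoord_expansion.
Qed.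

End ModuleDualBasis.

Section CanonicalMapInverse.
Variables (k : comPzRingType) (X : Type) (H : X -> X -> lmodType k)
  (mulH : forall x y z, H x y -> H y z -> H x z) (oneH : forall x, H x x)
  (Delta : forall x y, H x y -> seq (H x y * H x y))
  (eps : forall x y, H x y -> k)
  (A : X -> X -> lmodType k)
  (mulA : forall x y z, A x y -> A y z -> A x z) (oneA : forall x, A x x)
  (rho : forall x y, A x y -> seq (A x y * H x y)).
Hypotheses (hH : lin_cat mulH oneH)
  (hA : comodule_cat mulH oneH Delta eps mulA oneA rho).

Let hAcat := cc_lincat hA.
Local Notation coinv := (coinv oneH rho).
Local Notation can := (can mulA rho).
Local Notation delta := (delta mulA rho).

Variables (x y : X) (n : nat) (f : A x y -> 'I_n -> A x x) (g : ('I_n -> A x x) -> A x y).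
Hypotheses (f_coinv : forall a i, coinv (f a i))
  (g_Blin : forall b v w, coinv b -> (forall i, coinv (v i)) -> (forall i, coinv (w i)) ->
     g (fun i => mulA b (v i) + w i) = mulA b (g v) + g w)
  (fK : cancel f g).

Variables (nH : nat) (fH : H x y -> 'I_nH -> k) (gH : ('I_nH -> k) -> H x y).
Hypotheses (fH_lin : forall c h h' j, fH (c *: h + h') j = c * fH h j + fH h' j)
  (gH_lin : forall c v w, gH (fun j => c * v j + w j) = c *: gH v + gH w)
  (fHK : cancel fH gH).

Variables (gamma : 'I_n -> H x y -> A y x).
Hypotheses (gamma_klin : forall i, klin (gamma i))
  (delta_gamma : forall i a, delta (gamma i) a = f a i)
  (delta_inj : forall g g' : H x y -> A y y, klin g -> klin g' ->
     (forall a, delta g a = delta g' a) -> forall h, g h = g' h).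

Local Notation e := (cat_dual_basis oneA g).
Local Notation tcoord := (tcoord fH).

Let e_expansion :=
  cat_dual_basis_expansion hAcat (coinv0 hA x) (coinv1 hA x) f_coinv g_Blin fK.

Lemma tcoord_rho_sum (I : Type) (r : seq I) (F : I -> A x y) j :
  tcoord (rho (\sum_(i <- r) F i)) j = \sum_(i <- r) tcoord (rho (F i)) j.
Proof.
elim: r => [|i r IH].
  by rewrite !big_nil (tcoord_teqk fH_lin j (rho0 hA x y)) /tcoord big_nil.
by rewrite !big_cons (tcoord_teqk fH_lin j (rhoD hA _ _)) /tcoord big_cat -IH.
Qed.

Lemma tcoord_rho_mul_coinv (b : A x x) (a : A x y) j : coinv b ->
  tcoord (rho (mulA b a)) j = \sum_(q <- rho a) fH q.2 j *: mulA b q.1.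
Proof.
by move=> hb; rewrite (tcoord_teqk fH_lin j (rho_mul_coinv hH hA a hb)) /tcoord big_map.
Qed.

Definition kappa1 z (p : A z y * H x y) : seq (A z x * A x y) :=
  [seq (mulA p.1 (gamma i p.2), e i) | i <- enum 'I_n].

Definition kappa z : seq (A z y * H x y) -> seq (A z x * A x y) := flatmap (@kappa1 z).

Lemma can_kappa1_coord j h :
  tcoord (can (kappa1 (oneA y, h))) j = fH h j *: oneA y.
Proof.
pose psi h := \sum_(i <- enum 'I_n) \sum_(q <- rho (e i)) fH q.2 j *: mulA (gamma i h) q.1.
have psiE h' : tcoord (can (kappa1 (oneA y, h'))) j = psi h'.
  rewrite /psi /tcoord /can /kappa1 big_flatten !big_map; apply: eq_bigr => i _.
  by rewrite big_map; apply: eq_bigr => q _ /=; rewrite (lc_1l hAcat).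
rewrite psiE; apply: (delta_inj (g := psi) (g' := fun h => fH h j *: oneA y)).
- move=> c h1 h2; rewrite /psi scaler_sumr -big_split; apply: eq_bigr => i _.
  rewrite scaler_sumr -big_split; apply: eq_bigr => q _ /=.
  by rewrite gamma_klin (lc_linl hAcat) scalerDr !scalerA mulrC.
- by move=> c h1 h2 /=; rewrite fH_lin scalerDl scalerA.
move=> a; transitivity (tcoord (rho a) j); last first.
  by apply: eq_bigr => p _; rewrite (lc_mulZr hAcat) (lc_1r hAcat).
(* [delta gamma_i = f(-)_i]: [delta psi a] is the coordinate of [rho] of the f-expansion of [a]. *)
transitivity (\sum_(i <- enum 'I_n) \sum_(q <- rho (e i)) fH q.2 j *: mulA (f a i) q.1).
  rewrite /delta /psi; under eq_bigr => p _ do rewrite (lc_mul_sumr hAcat).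
  rewrite exchange_big; apply: eq_bigr => i _.
  under eq_bigr => p _ do rewrite (lc_mul_sumr hAcat).
  rewrite exchange_big; apply: eq_bigr => q _.
  rewrite -delta_gamma /delta (lc_mul_suml hAcat) scaler_sumr; apply: eq_bigr => p _.
  by rewrite (lc_mulZr hAcat) (lc_assoc hAcat).
rewrite [in RHS](e_expansion a).
by rewrite tcoord_rho_sum; apply: eq_bigr => i _; rewrite tcoord_rho_mul_coinv.
Qed.

Lemma can_kappa1 z (a : A z y) h : teqk (can (kappa1 (a, h))) [:: (a, h)].
Proof.
have -> : can (kappa1 (a, h)) = [seq (mulA a p.1, p.2) | p <- can (kappa1 (oneA y, h))].
  rewrite /can /kappa1 map_flatten -!map_comp; congr flatten; apply: eq_map => i /=.
  rewrite -map_comp; apply: eq_map => q /=.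
  by rewrite (lc_1l hAcat) (lc_assoc hAcat).
have can_kappa1_one : teqk (can (kappa1 (oneA y, h))) [:: (oneA y, h)].
  apply: (teqk_tcoord gH_lin fHK) => j; rewrite can_kappa1_coord.
  by rewrite /tcoord big_cons big_nil addr0.
by have := teqk_mull hA a can_kappa1_one; rewrite /= (lc_1r hAcat).
Qed.

Lemma teqk_kappa z (u v : seq (A z y * H x y)) :
  teqk u v -> teqB oneH mulA rho (kappa u) (kappa v).
Proof.
move=> huv; apply: teq_flatmap huv => [m m' h|m h h'|h|m|m h m' h' [c [-> ->]]];
  rewrite /kappa1 /=.
- under eq_map => i do rewrite (lc_mulDl hAcat).
  exact: (teq_map_addl _ (fun i => mulA m (gamma i h)) (fun i => mulA m' (gamma i h))).
- under eq_map => i do rewrite (klinD (gamma_klin i)) (lc_mulDr hAcat).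
  exact: (teq_map_addl _ (fun i => mulA m (gamma i h)) (fun i => mulA m (gamma i h'))).
- under eq_map => i do rewrite (lc_mul0l hAcat); exact: teq_map_0l.
- under eq_map => i do rewrite (klin0 (gamma_klin i)) (lc_mul0r hAcat); exact: teq_map_0l.
- under eq_map => i do rewrite (lc_mulZl hAcat) -(lc_mulZr hAcat) -(klinZ (gamma_klin i)).
  exact: teq_refl.
Qed.

Lemma kappa_can z (s : seq (A z x * A x y)) : teqB oneH mulA rho (kappa (can s)) s.
Proof.
rewrite /kappa canE flatmap_flatmap; apply: teq_flatmap_id => -[a a'] /=.
rewrite flatmap_map.
apply: teq_trans (teq_flatmap_suml _ (fun q i => mulA (mulA a q.1) (gamma i q.2)) e _ _) _.
have sum_gamma i : \sum_(q <- rho a') mulA (mulA a q.1) (gamma i q.2) = mulA a (f a' i).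
  rewrite -delta_gamma /delta (lc_mul_sumr hAcat).
  by apply: eq_bigr => q _; rewrite (lc_assoc hAcat).
under eq_map => i do rewrite sum_gamma.
apply: teq_trans (teq_map (G := fun i => (a, mulA (f a' i) (e i))) _ _) _.
  by move=> i; apply: teq_bal; exists (f a' i).
rewrite [X in teq _ _ [:: (a, X)]](e_expansion a').
exact/teq_sym/teq_sumr.
Qed.

Lemma can_kappa z (u : seq (A z y * H x y)) : teqk (can (kappa u)) u.
Proof.
by rewrite /kappa canE flatmap_flatmap; apply: teq_flatmap_id => -[a h]; apply: can_kappa1.
Qed.

Lemma can_bij_of_dual_bases z : can_bij oneH mulA rho z x y.
Proof.
split=> [s t st|s t st|u].
- exact: (teqB_can hH hA st).
- apply: teq_trans (teq_sym (kappa_can s)) _.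
  exact: teq_trans (teqk_kappa st) (kappa_can t).
- by exists (kappa u); apply: can_kappa.
Qed.

End CanonicalMapInverse.

Theorem proposition7p3 (k : comPzRingType) (X : Type)
  (H : X -> X -> lmodType k)
  (mulH : forall x y z, H x y -> H y z -> H x z) (oneH : forall x, H x x)
  (Delta : forall x y, H x y -> seq (H x y * H x y))
  (eps : forall x y, H x y -> k)
  (A : X -> X -> lmodType k)
  (mulA : forall x y z, A x y -> A y z -> A x z) (oneA : forall x, A x x)
  (rho : forall x y, A x y -> seq (A x y * H x y)) :
  semi_hopf_cat mulH oneH Delta eps ->
  comodule_cat mulH oneH Delta eps mulA oneA rho ->
  (forall x y : X, fgp_left_coinv oneH mulA rho x y) ->
  (forall x y : X, exists (n : nat) (f : H x y -> 'I_n -> k) (g : ('I_n -> k) -> H x y),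
      [/\ forall (c : k) (h h' : H x y) i, f (c *: h + h') i = c * f h i + f h' i,
          forall (c : k) (v w : 'I_n -> k), g (fun i => c * v i + w i) = c *: g v + g w
        & forall h, g (f h) = h]) ->
  (forall x y : X, delta_bij oneH mulA rho x y x /\ delta_bij oneH mulA rho x y y) ->
  forall x y z : X, can_bij oneH mulA rho z x y.
Proof.
move=> hH hA A_fgp H_fgp delta_bijective x y z.
have [n [f [g [f_coinv f_Blin g_Blin fK]]]] := A_fgp x y.
have [nH [fH [gH [fH_lin gH_lin fHK]]]] := H_fgp x y.
have [[_ delta_surj] [delta_inj _]] := delta_bijective x y.
have /functional_choice[gamma gammaP] : forall i : 'I_n, exists gm : H x y -> A y x,
    klin gm /\ forall a, delta mulA rho gm a = f a i.
  by move=> i; apply: delta_surj => b a a' hb; apply: f_Blin.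
exact: (can_bij_of_dual_bases (sh_lincat hH) hA f_coinv g_Blin fK fH_lin gH_lin fHK
  (fun i => (gammaP i).1) (fun i => (gammaP i).2) delta_inj z).
Qed.
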